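(* Let $G=(V,E)$ be a finite simple undirected graph with $N\ge1$ vertices and put $G_0=G$. Then there exists a sequence of induced subgraphs $G_0\supseteq G_1\supseteq\cdots\supseteq G_N$, where $G_N$ is the graph with no vertices and, for each $i=0,\dots,N-1$, $G_{i+1}$ is obtained from $G_i$ by deleting one vertex, such that $C(G_i)\ge C(G_{i+1})$ for all $i=0,\dots,N-1$.
   Context: For a vertex $u$ of a graph, $d_u$ is its degree and $T(u)$ the number of triangles containing $u$; the local clustering coefficient is $C(u)=\frac{2T(u)}{d_u(d_u-1)}$ if $d_u>1$ and $C(u)=0$ otherwise. The average clustering coefficient of a graph $H$ with $n\ge1$ vertices is $C(H)=\frac1n\sum_{u\in V(H)}C(u)$ (local coefficients computed in $H$); by convention the graph with no vertices has $C=0$. *)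

From HB Require Import structures.
From mathcomp Require Import all_boot all_order all_algebra.
Set Implicit Arguments. Unset Strict Implicit. Unset Printing Implicit Defensive.
Import Order.TTheory GRing.Theory Num.Theory.

(* A finite simple undirected graph: vertex type T : finType, adjacency
   e : rel T, symmetric and irreflexive.  Induced subgraphs are given by
   their vertex set S : {set T}. *)

Definition simple_graph (T : finType) (e : rel T) : Prop :=
  symmetric e /\ irreflexive e.

Definition ideg (T : finType) (e : rel T) (S : {set T}) (u : T) : nat :=
  #|[set v in S | e u v]|.

Definition itri (T : finType) (e : rel T) (S : {set T}) (u : T) : nat :=
  #|[set A : {set T} | [&& A \subset [set v in S | e u v], #|A| == 2 &
                          [forall x in A, forall y in A, (x != y) ==> e x y]]]|.

Definition local_cc (T : finType) (e : rel T) (S : {set T}) (u : T) : rat :=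
  let d := ideg e S u in
  if (1 < d)%N then (2 * (itri e S u)%:R / (d%:R * (d%:R - 1)))%R else 0%R.

Definition avg_cc (T : finType) (e : rel T) (S : {set T}) : rat :=
  if #|S| == 0%N then 0%R
  else ((#|S|%:R)^-1 * \sum_(u in S) local_cc e S u)%R.

From HB Require Import structures.
From mathcomp Require Import all_boot all_order all_algebra ring.
Import Order.TTheory GRing.Theory Num.Theory.
Set Implicit Arguments. Unset Strict Implicit.

(* The local coefficient of u is the edge density of its neighbourhood N.
   Deleting a vertex of N does not increase the density on average: a
   2-subset of N survives the deletion of exactly |N| - 2 of its vertices,
   so \sum_(v in N) t(N - v) = t(N) (|N| - 2), while the normalisation
   changes from binom(|N|,2) to binom(|N|-1,2).  Deleting any other vertex
   leaves C(u) unchanged.  Summing over u, the mean over v of C(G - v) is at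
   most C(G), so some single deletion does not increase C; iterate. *)

Lemma exists_le_mean (R : realDomainType) (I : finType) (A : {set I})
    (F : I -> R) (c : R) :
  A != set0 -> (\sum_(i in A) F i <= #|A|%:R * c)%R ->
  exists2 i, i \in A & (F i <= c)%R.
Proof.
move=> /set0Pn [i0 i0A] sumF; apply/exists_inP.
apply: contraTT sumF => /exists_inPn F_gt_c.
rewrite -ltNge mulr_natl -sumr_const.
apply: ltr_sum => [|i iA]; last by rewrite ltNge F_gt_c.
by apply/hasP; exists i0 => //; rewrite mem_index_enum.
Qed.

Section ClusteringCoefficient.
Variables (T : finType) (e : rel T).

Definition nbhd (S : {set T}) (u : T) := [set v in S | e u v].

Definition is_clique (A : {set T}) :=
  [forall x in A, forall y in A, (x != y) ==> e x y].

Definition edges_in (N : {set T}) :=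
  [set A : {set T} | [&& A \subset N, #|A| == 2 & is_clique A]].

Definition edge_density (N : {set T}) : rat :=
  let d := #|N| in
  if (1 < d)%N then (2 * #|edges_in N|%:R / (d%:R * (d%:R - 1)))%R else 0%R.

Definition sum_cc (S : {set T}) : rat := \sum_(u in S) local_cc e S u.

Lemma local_ccE (S : {set T}) u : local_cc e S u = edge_density (nbhd S u).
Proof. by []. Qed.

Lemma avg_ccE (S : {set T}) : avg_cc e S = (#|S|%:R^-1 * sum_cc S)%R.
Proof.
rewrite /avg_cc; case: eqP => // /eqP; rewrite cards_eq0 => /eqP ->.
by rewrite /sum_cc big_set0 mulr0.
Qed.

Lemma card_edges_in_setD1 (N : {set T}) v :
  #|edges_in (N :\ v)| = \sum_(A in edges_in N) (v \notin A : nat).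
Proof.
rewrite -big_mkcondr -sum1_card; apply: eq_bigl => A.
by rewrite !inE subsetD1 -!andbA; case: (v \in A); rewrite ?andbF ?andbT.
Qed.

Lemma sum_card_edges_in_setD1 (N : {set T}) :
  \sum_(v in N) #|edges_in (N :\ v)| = #|edges_in N| * (#|N| - 2).
Proof.
under eq_bigr do rewrite card_edges_in_setD1.
rewrite exchange_big /= -sum_nat_const; apply: eq_bigr => A.
rewrite inE => /and3P [sAN /eqP cardA _].
rewrite -big_mkcondr /= sum1dep_card -(cardsID A N) (setIidPr sAN) cardA addKn.
by apply: eq_card => v; rewrite !inE andbC.
Qed.

Lemma edge_density_ge0 (N : {set T}) : (0 <= edge_density N)%R.
Proof.
rewrite /edge_density; case: #|N| => [|[|d]] //=.
by rewrite divr_ge0 ?mulr_ge0 // -natr1 addrK.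
Qed.

Lemma sum_edge_density_setD1 (N : {set T}) :
  (\sum_(v in N) edge_density (N :\ v) <= #|N|%:R * edge_density N)%R.
Proof.
have cardD1 v : v \in N -> #|N :\ v| = #|N|.-1 by rewrite (cardsD1 v N) => ->.
have [N_small | N_large] := leqP #|N| 2.
  rewrite big1 ?mulr_ge0 ?edge_density_ge0 // => v vN.
  by rewrite /edge_density cardD1 //; case: #|N| N_small => [|[|[|]]].
rewrite (eq_bigr (fun v => 2 * #|edges_in (N :\ v)|%:R /
                   ((#|N|.-1)%:R * ((#|N|.-1)%:R - 1))))%R; last first.
  move=> v vN; rewrite /edge_density cardD1 //.
  by case: #|N| N_large => [|[|[|]]].
rewrite -mulr_suml -mulr_sumr -natr_sum sum_card_edges_in_setD1 /edge_density.
case: #|N| N_large => [|[|[|d]]] // _ /=.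
rewrite subn2 natrM -!natr1 !addrK le_eqVlt; apply/predU1l.
by field; rewrite !natr1 !pnatr_eq0.
Qed.

Hypothesis e_irr : irreflexive e.

Lemma sum_local_cc_setD1 (S : {set T}) u : u \in S ->
  (\sum_(v in S :\ u) local_cc e (S :\ v) u <= (#|S|.-1)%:R * local_cc e S u)%R.
Proof.
move=> uS; set N := nbhd S u.
have sub_N : N \subset S :\ u.
  apply/subsetP => v; rewrite !inE => /andP [-> euv]; rewrite andbT.
  by apply: contraTneq euv => ->; rewrite e_irr.
have nbhd_in v : v \in N -> nbhd (S :\ v) u = N :\ v.
  by move=> _; apply/setP => w; rewrite !inE andbA.
have nbhd_out v : v \notin N -> nbhd (S :\ v) u = N.
  move=> vN; apply/setP => w; rewrite !inE -andbA andb_idl //.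
  by apply: contraTneq => ->; move: vN; rewrite inE.
have -> : #|S|.-1 = #|N| + #|(S :\ u) :\: N|.
  by rewrite (cardsD1 u S) uS -(cardsID N (S :\ u)) (setIidPr sub_N).
rewrite (bigID (mem N)) /= natrD mulrDl local_ccE -/N.
apply: lerD.
  rewrite (eq_bigl (mem N)) => [|v]; last first.
    by rewrite andb_idl // => /(subsetP sub_N).
  rewrite (eq_bigr (fun v => edge_density (N :\ v))) => [|v vN].
    exact: sum_edge_density_setD1.
  by rewrite local_ccE nbhd_in.
rewrite (eq_bigl (fun v => v \in (S :\ u) :\: N)) => [|v]; last first.
  by rewrite [in RHS]in_setD andbC.
rewrite (eq_bigr (fun=> edge_density N)) => [|v]; last first.
  by rewrite in_setD => /andP [vN _]; rewrite local_ccE nbhd_out.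
by rewrite sumr_const mulr_natl.
Qed.

Lemma sum_sum_cc_setD1 (S : {set T}) :
  (\sum_(v in S) sum_cc (S :\ v) <= (#|S|.-1)%:R * sum_cc S)%R.
Proof.
rewrite /sum_cc (exchange_big_dep (mem S)) /=; last by move=> v u _ /setD1P [].
rewrite mulr_sumr; apply: ler_sum => u uS.
rewrite (eq_bigl (mem (S :\ u))) => [|v]; first exact: sum_local_cc_setD1.
by rewrite !inE eq_sym uS andbT andbC.
Qed.

Lemma avg_cc_ge0 (S : {set T}) : (0 <= avg_cc e S)%R.
Proof.
rewrite avg_ccE mulr_ge0 ?invr_ge0 ?sumr_ge0 // => u _.
exact: edge_density_ge0.
Qed.

Lemma sum_avg_cc_setD1 (S : {set T}) :
  (\sum_(v in S) avg_cc e (S :\ v) <= #|S|%:R * avg_cc e S)%R.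
Proof.
have cardD1 v : v \in S -> #|S :\ v| = #|S|.-1 by rewrite (cardsD1 v S) => ->.
rewrite (eq_bigr (fun v => (#|S|.-1)%:R^-1 * sum_cc (S :\ v)))%R; last first.
  by move=> v vS; rewrite avg_ccE cardD1.
rewrite -mulr_sumr.
have [S_small | S_large] := leqP #|S| 1.
  rewrite (_ : #|S|.-1 = 0%N) ?invr0 ?mul0r ?mulr_ge0 ?avg_cc_ge0 //.
  by case: #|S| S_small => [|[]].
have n_pos : (0 < #|S|.-1)%N by rewrite -ltnS prednK // ltnW.
rewrite avg_ccE mulrA divff ?pnatr_eq0 -?lt0n ?(ltnW S_large) // mul1r.
by rewrite ler_pdivrMl ?ltr0n // sum_sum_cc_setD1.
Qed.

Lemma exists_avg_cc_setD1_le (S : {set T}) : S != set0 ->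
  exists2 v, v \in S & (avg_cc e (S :\ v) <= avg_cc e S)%R.
Proof. by move=> S_neq0; apply: exists_le_mean S_neq0 (sum_avg_cc_setD1 S). Qed.

Lemma exists_avg_cc_deletion_chain n (S : {set T}) : #|S| = n ->
  exists G : nat -> {set T},
    [/\ G 0%N = S, G n = set0 &
        forall i, (i < n)%N ->
          (exists2 v, v \in G i & G i.+1 = G i :\ v) /\
          (avg_cc e (G i.+1) <= avg_cc e (G i))%R].
Proof.
elim: n S => [|n IHn] S cardS.
  by exists (fun=> S); split=> //; apply/eqP; rewrite -cards_eq0 cardS.
have [|v vS le_avg] := exists_avg_cc_setD1_le (S := S).
  by rewrite -card_gt0 cardS.
have [|G [G0 Gn G_step]] := IHn (S :\ v).
  by move: cardS; rewrite (cardsD1 v S) vS => -[].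
exists (fun i => if i is j.+1 then G j else S); split=> // -[|i] lt_i /=.
  by rewrite G0; split=> //; exists v.
exact: G_step.
Qed.

End ClusteringCoefficient.

Theorem mainTheorem8 (T : finType) (e : rel T) :
  simple_graph e -> (0 < #|T|)%N ->
  exists G : nat -> {set T},
    [/\ G 0%N = [set: T], G #|T| = set0 &
        forall i, (i < #|T|)%N ->
          (exists2 v, v \in G i & G i.+1 = G i :\ v) /\
          (avg_cc e (G i.+1) <= avg_cc e (G i))%R].
Proof.
move=> [_ e_irr] _.
exact (exists_avg_cc_deletion_chain e_irr (cardsT T)).
Qed.
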